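(* Let $0<\delta<1/10$. Any one-way (Alice to Bob) communication protocol for the $\mathsf{Overwrite}$ problem that errs with probability at most $\delta$ over inputs drawn from $\mathcal{D}_{\mathsf{Overwrite}}$ has communication complexity $\Omega(n)$ with respect to $\mathcal{D}_{\mathsf{Overwrite}}$.
   Context: In $\mathsf{Overwrite}$, Alice gets $X^A\in\{0,1,*\}^n$ and Bob gets $X^B\in\{0,1\}^n$ and an index $i^*\in[n]$, with the promise that for every $i\ne i^*$ either $X^A_i=X^B_i$ or $X^A_i=*$. Alice sends one message to Bob, who must output $X^A_{i^*}$; if $X^A_{i^*}=*$ both outputs $0$ and $1$ are correct. The distribution $\mathcal{D}_{\mathsf{Overwrite}}$: choose $i^*$ uniformly from $[n]$ and $X^B$ uniformly from $\{0,1\}^n$; set $X^A_{i^*}$ to $*$ with probability $1/2$, to $0$ with probability $1/4$ and to $1$ with probability $1/4$; independently for each $i\ne i^*$, set $X^A_i=*$ with probability $1/2$ and $X^A_i=X^B_i$ with probability $1/2$. Communication complexity with respect to a distribution is the expected message length (in bits) on inputs drawn from it. *)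

From HB Require Import structures.
From mathcomp Require Import all_boot all_order all_algebra.
From mathcomp Require Import reals.
Set Implicit Arguments. Unset Strict Implicit. Unset Printing Implicit Defensive.
Import Order.TTheory GRing.Theory Num.Theory.
Local Open Scope ring_scope.

(* Alice's input X^A in {0,1,*}^n : None encodes '*', Some b encodes bit b. *)
Definition inA (n : nat) := {ffun 'I_n -> option bool}.
Definition inB (n : nat) := {ffun 'I_n -> bool}.

Definition D_overwrite (R : realType) (n : nat) (i : 'I_n) (xb : inB n) (xa : inA n) : R :=
  (n%:R)^-1 * ((2 ^ n)%N%:R)^-1 *
  (if xa i is Some _ then 1/4 else 1/2) *
  \prod_(j : 'I_n | j != i)
     (match xa j with None => 1/2 | Some b => if b == xb j then 1/2 else 0 end).

Definition ow_correct (n : nat) (i : 'I_n) (xa : inA n) (o : bool) : bool :=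
  if xa i is Some b then o == b else true.

(* A one-way protocol with public randomness r drawn from rho over a finite type Rnd:
   Alice sends the bit string alice r X^A, Bob outputs bob r msg X^B i*.  *)
Definition ow_error (R : realType) (n : nat) (Rnd : finType) (rho : Rnd -> R)
  (alice : Rnd -> inA n -> seq bool) (bob : Rnd -> seq bool -> inB n -> 'I_n -> bool) : R :=
  \sum_(r : Rnd) \sum_(i : 'I_n) \sum_(xb : inB n) \sum_(xa : inA n)
     rho r * D_overwrite R i xb xa *
     (if ow_correct i xa (bob r (alice r xa) xb i) then 0 else 1).

Definition ow_cost (R : realType) (n : nat) (Rnd : finType) (rho : Rnd -> R)
  (alice : Rnd -> inA n -> seq bool) : R :=
  \sum_(r : Rnd) \sum_(i : 'I_n) \sum_(xb : inB n) \sum_(xa : inA n)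
     rho r * D_overwrite R i xb xa * (size (alice r xa))%:R.

From HB Require Import structures.
From mathcomp Require Import all_boot all_order all_algebra.
From mathcomp Require Import reals exp.
From mathcomp Require Import lra ring.
Import Order.TTheory GRing.Theory Num.Theory.
Set Implicit Arguments.
Unset Strict Implicit.
Unset Printing Implicit Defensive.

Local Open Scope ring_scope.

(* Fix Bob's input b.  Exactly 2^n inputs x of Alice are consistent with b (x_i is
   a star or b_i for every i), so by Gibbs' inequality every sub-probability q on
   Alice's inputs has expected code length -ln q >= n ln 2 on a uniformly random
   consistent x.  We choose q as a code that sends Alice's message m (weight
   4^-|m|, summable as in Kraft's inequality) and then, coordinate by coordinate,
   whether x_i is a star, with odds depending on whether Bob's guess at i is right.
   For a Bob that ignores b_i when answering at i (which costs nothing, by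
   averaging), its expected length is
   ln 2 (1 + 2 cost) + n (3 ln 2 + ln (4/3)) / 4 + n ln 2 * error,
   so ln 2 (1 + 2 cost) >= n (ln (3/2) / 4 - ln 2 * error), which is linear in n
   when error < 1/10.  The averaging uses that, on functions not reading b_i,
   D_Overwrite conditioned on i* = i is the uniform measure on consistent pairs. *)

Lemma sum_partition_undup {V : nmodType} {T : finType} {U : eqType}
    (g : T -> U) (F : T -> V) :
  \sum_x F x = \sum_(u <- undup [seq g x | x <- enum T]) \sum_(x | g x == u) F x.
Proof.
symmetry; under eq_bigr do rewrite big_mkcond /=.
rewrite exchange_big /=; apply: eq_bigr => x _.
rewrite -big_mkcond -big_filter.
have gx : g x \in undup [seq g x | x <- enum T] by rewrite mem_undup map_f ?mem_enum.
rewrite (eq_filter (a2 := pred1 (g x))); last by move=> u; rewrite /= eq_sym.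
by rewrite filter_pred1_uniq ?undup_uniq // big_seq1.
Qed.

(** * Logarithms, Gibbs' and Kraft's inequalities *)

Section Entropy.
Variable R : realType.

Lemma ln_le_subr1 {y : R} : 0 < y -> ln y <= y - 1.
Proof. by move=> y0; have := @le_ln1Dx R (y - 1); rewrite (addrC 1) subrK; apply; lra. Qed.

Lemma gibbs_inequality (T : finType) (w q : T -> R) (N : R) :
  (forall x, 0 <= w x) -> (forall x, 0 < q x) -> \sum_x w x = N -> 0 < N ->
  \sum_x w x * q x <= 1 -> N * ln N <= \sum_x w x * - ln (q x).
Proof.
move=> w_ge0 q_gt0 sum_w N_gt0 sum_wq.
under eq_bigr do rewrite mulrN; rewrite sumrN.
have pointwise x : w x * ln N + w x * ln (q x) <= N * (w x * q x) - w x.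
  rewrite -mulrDr -lnM ?posrE //.
  have := ler_wpM2l (w_ge0 x) (ln_le_subr1 (mulr_gt0 N_gt0 (q_gt0 x))); lra.
have : \sum_x (w x * ln N + w x * ln (q x)) <= \sum_x (N * (w x * q x) - w x).
  by apply: ler_sum => x _; exact: pointwise.
rewrite !big_split /= sumrN -!mulr_suml -mulr_sumr sum_w.
have : N * \sum_x w x * q x <= N by rewrite -[leRHS]mulr1 ler_pM2l.
lra.
Qed.

Lemma ln_prod (I : Type) (r : seq I) (P : pred I) (F : I -> R) :
  (forall i, P i -> 0 < F i) -> ln (\prod_(i <- r | P i) F i) = \sum_(i <- r | P i) ln (F i).
Proof.
move=> F_gt0; suff [-> //] : \sum_(i <- r | P i) ln (F i) = ln (\prod_(i <- r | P i) F i)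
    /\ 0 < \prod_(i <- r | P i) F i.
apply: (big_rec2 (fun s p => s = ln p /\ 0 < p)) => [|i s p P_i [-> p_gt0]].
  by rewrite ln1.
by rewrite lnM ?posrE ?F_gt0 // mulr_gt0 ?F_gt0.
Qed.

Lemma ln2_gt0 : 0 < ln 2 :> R.
Proof. by rewrite ln_gt0 // ltr1n. Qed.

Lemma ln4 : ln 4 = 2 * ln 2 :> R.
Proof. by rewrite (_ : 4 = 2 * 2) ?lnM ?posrE //; lra. Qed.

Lemma ln3half : ln (3/2) = ln 2 - ln (4/3) :> R.
Proof. by rewrite -ln_div ?posrE //; [congr ln; field|lra]. Qed.

Lemma ln2_lt_ln3half : 2 * ln 2 < 5 * ln (3/2) :> R.
Proof.
by rewrite [2 * _]mulr_natl [5 * _]mulr_natl -!lnXn ?ltr_ln ?posrE ?exprn_gt0 //; lra.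
Qed.

Section Kraft.

Let weight (m : seq bool) : R := 4^-1 ^+ size m.

Lemma sum_weight_ohead (c : bool) (s : seq (seq bool)) :
  \sum_(m <- s | ohead m == Some c) weight m
  = 4^-1 * \sum_(t <- [seq behead m | m <- s & ohead m == Some c]) weight t.
Proof.
rewrite big_map big_filter mulr_sumr; apply: eq_bigr.
by case=> [|d t] // _; rewrite /weight /= exprS.
Qed.

Lemma sum_weight_nil {s : seq (seq bool)} :
  uniq s -> \sum_(m <- s | m == [::]) weight m <= 1.
Proof.
move=> s_uniq; rewrite -big_filter.
have [nil_s|nil_s] := boolP ([::] \in s).
  by rewrite (filter_pred1_uniq s_uniq nil_s) big_seq1 /weight expr0.
rewrite big_seq big1 // => m; rewrite mem_filter => /andP[/eqP -> ].
by rewrite (negbTE nil_s).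
Qed.

Lemma sum_weight_split (s : seq (seq bool)) :
  \sum_(m <- s) weight m = \sum_(m <- s | m == [::]) weight m
    + \sum_(m <- s | ohead m == Some false) weight m
    + \sum_(m <- s | ohead m == Some true) weight m.
Proof.
rewrite (big_mkcond (fun m => m == [::])) (big_mkcond (fun m => ohead m == _)).
rewrite (big_mkcond (fun m => ohead m == _)) -!big_split; apply: eq_bigr.
by case=> [|[] t] _ /=; rewrite ?addr0 ?add0r.
Qed.

(* No prefix-freeness is needed: there are 2^k binary words of length k, each of
   weight 4^-k. *)
Lemma sum_exp4V_size (s : seq (seq bool)) :
  uniq s -> \sum_(m <- s) 4^-1 ^+ size m <= 2 :> R.
Proof.
suff bounded L s' : uniq s' -> all (fun m => size m < L)%N s' ->
    \sum_(m <- s') weight m <= 2.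
  move=> s_uniq; apply: (bounded (\max_(m <- s) size m).+1) => //.
  by apply/allP => m m_s; rewrite ltnS leq_bigmax_seq.
elim: L s' => [|L IH] s' s'_uniq s'_size.
  by case: s' s'_uniq s'_size => [|m ?] _ //=; rewrite big_nil ler0n.
have head_part c : \sum_(m <- s' | ohead m == Some c) weight m <= 2^-1.
  rewrite sum_weight_ohead.
  have : \sum_(t <- [seq behead m | m <- s' & ohead m == Some c]) weight t <= 2.
    apply: IH.
      rewrite map_inj_in_uniq ?filter_uniq // => m m'.
      rewrite !mem_filter => /andP[m_c _] /andP[m'_c _].
      by case: m m'_c m_c => [|d t] //; case: m' => [|d' t'] // /eqP[->] /eqP[->] /= ->.
    apply/allP => t /mapP[m]; rewrite mem_filter => /andP[m_c /(allP s'_size) m_size] ->.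
    by case: m m_c m_size.
  lra.
rewrite sum_weight_split.
have := sum_weight_nil s'_uniq; have := head_part false; have := head_part true.
lra.
Qed.

End Kraft.
End Entropy.

(** * The distribution D_Overwrite and consistent pairs *)

Lemma sum_option (V : nmodType) (F : option bool -> V) :
  \sum_o F o = F None + F (Some false) + F (Some true).
Proof.
rewrite (bigD1 None) //= (bigD1 (Some false)) //= (bigD1 (Some true)) //=.
by rewrite big_pred0 ?addr0 ?addrA // => -[[]|].
Qed.

Section Overwrite.
Variables (R : realType) (n : nat).

Definition compat (o : option bool) (c : bool) : bool :=
  if o is Some d then d == c else true.

Definition consistentR (x : inA n) (b : inB n) : R := \prod_j (compat (x j) (b j))%:R.

Lemma consistentR_ge0 x b : 0 <= consistentR x b.
Proof. by apply: prodr_ge0 => j _; rewrite ler0n. Qed.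

Lemma card_inB : #|{: inB n}| = (2 ^ n)%N.
Proof. by rewrite card_ffun card_bool card_ord. Qed.

Definition upd (b : inB n) (i : 'I_n) (c : bool) : inB n :=
  [ffun j => if j == i then c else b j].

Definition flip (i : 'I_n) (b : inB n) : inB n := upd b i (~~ b i).

Lemma upd_eq b i c : upd b i c i = c.
Proof. by rewrite ffunE eqxx. Qed.

Lemma upd_ne b i c j : j != i -> upd b i c j = b j.
Proof. by rewrite ffunE => /negbTE ->. Qed.

Lemma upd_upd b i c c' : upd (upd b i c) i c' = upd b i c'.
Proof. by apply/ffunP => j; rewrite !ffunE; case: eqP. Qed.

Lemma upd_id b i : upd b i (b i) = b.
Proof. by apply/ffunP => j; rewrite ffunE; case: eqP => // ->. Qed.

Lemma flipK i : involutive (flip i).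
Proof. by move=> b; rewrite /flip upd_eq negbK upd_upd upd_id. Qed.

Lemma sum_flip i (G : inB n -> R) : \sum_b G (flip i b) = \sum_b G b.
Proof. by rewrite [RHS](reindex_inj (inv_inj (flipK i))). Qed.

Lemma sum_consistent_prod (F : 'I_n -> option bool -> R) (b : inB n) :
  \sum_(x : inA n) consistentR x b * \prod_j F j (x j) = \prod_j (F j None + F j (Some (b j))).
Proof.
have split x : consistentR x b * \prod_j F j (x j)
    = \prod_j ((compat (x j) (b j))%:R * F j (x j)) by rewrite big_split.
rewrite (eq_bigr _ (fun x _ => split x)).
rewrite -(bigA_distr_bigA (fun j o => (compat o (b j))%:R * F j o)).
by apply: eq_bigr => j _; rewrite sum_option; case: (b j); rewrite /= !(mul1r, mul0r, addr0).
Qed.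

Lemma sum_consistent b : \sum_x consistentR x b = 2 ^+ n.
Proof.
transitivity (\prod_(j : 'I_n) (1 + 1 : R)); last by rewrite prodr_const card_ord.
rewrite -(sum_consistent_prod (fun _ _ => 1) b).
by apply: eq_bigr => x _; rewrite big1_eq mulr1.
Qed.

Lemma sum_consistent_coord i (G : option bool -> R) b :
  \sum_x consistentR x b * G (x i) = (G None + G (Some (b i))) * 2 ^+ n.-1.
Proof.
rewrite (eq_bigr (fun x => consistentR x b * \prod_j (if j == i then G (x j) else 1))); last first.
  by move=> x _; rewrite -big_mkcond big_pred1_eq.
rewrite (sum_consistent_prod (fun j o => if j == i then G o else 1)) (bigD1 i) //= eqxx.
congr (_ * _).
rewrite (eq_bigr (fun _ => 2)) => [|j /negbTE ->]; last by lra.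
by rewrite prodr_const cardC1 card_ord.
Qed.

(* Expectation over a uniformly random consistent pair (b, x); there are 4^n of them. *)
Definition Econs (F : inB n -> inA n -> R) : R :=
  (4 ^+ n)^-1 * \sum_b \sum_x consistentR x b * F b x.

Lemma expr4n : 4 ^+ n = 2 ^+ n * 2 ^+ n :> R.
Proof. by rewrite -exprMn -natrM. Qed.

Lemma Econs_cst c : Econs (fun _ _ => c) = c.
Proof.
rewrite /Econs; under eq_bigr do rewrite -big_distrl /= sum_consistent.
rewrite -big_distrl /= sumr_const card_inB -[X in _ * (X * c)]mulr_natr natrX expr4n.
by rewrite mulrA mulVf ?mul1r // mulf_neq0 // expf_neq0 // pnatr_eq0.
Qed.

Lemma EconsD (F G : inB n -> inA n -> R) :
  Econs (fun b x => F b x + G b x) = Econs F + Econs G.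
Proof.
by rewrite /Econs -mulrDr -big_split; congr (_ * _); apply: eq_bigr => b _;
  rewrite -big_split; apply: eq_bigr => x _; rewrite mulrDr.
Qed.

Lemma EconsZ c (F : inB n -> inA n -> R) : Econs (fun b x => c * F b x) = c * Econs F.
Proof.
rewrite /Econs [RHS]mulrCA; congr (_ * _); rewrite mulr_sumr; apply: eq_bigr => b _.
by rewrite mulr_sumr; apply: eq_bigr => x _; rewrite mulrCA.
Qed.

Lemma Econs_sum (I : finType) (F : I -> inB n -> inA n -> R) :
  Econs (fun b x => \sum_i F i b x) = \sum_i Econs (F i).
Proof.
rewrite /Econs -mulr_sumr; congr (_ * _).
rewrite [RHS]exchange_big /=; apply: eq_bigr => b _.
by rewrite [RHS]exchange_big /=; apply: eq_bigr => x _; rewrite mulr_sumr.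
Qed.

Lemma eq_Econs {F G : inB n -> inA n -> R} :
  (forall (b : inB n) (x : inA n), (forall j, compat (x j) (b j)) -> F b x = G b x) ->
  Econs F = Econs G.
Proof.
move=> FG; congr (_ * _); apply: eq_bigr => b _; apply: eq_bigr => x _.
have [all_compat|] := boolP [forall j, compat (x j) (b j)].
  by rewrite FG // => j; apply: (forallP all_compat).
rewrite negb_forall => /existsP[j not_compat].
by rewrite /consistentR (bigD1 j) //= (negbTE not_compat) !mul0r.
Qed.

Lemma expr2n_pred (i : 'I_n) : 2 ^+ n = 2 * 2 ^+ n.-1 :> R.
Proof. by rewrite -exprS prednK // (leq_ltn_trans _ (ltn_ord i)). Qed.

Lemma sum_coord i (F : bool -> R) :
  \sum_(b : inB n) F (b i) = 2 ^+ n.-1 * (F false + F true).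
Proof.
have flipped : \sum_(b : inB n) F (b i) = \sum_(b : inB n) F (~~ b i).
  by rewrite -(sum_flip i (fun b => F (b i))); apply: eq_bigr => b _; rewrite upd_eq.
have doubled :
    \sum_(b : inB n) F (b i) + \sum_(b : inB n) F (b i) = 2 ^+ n * (F false + F true).
  rewrite {2}flipped -big_split /= (eq_bigr (fun _ => F false + F true)).
    by rewrite sumr_const card_inB -[LHS]mulr_natl natrX.
  by move=> b _; case: (b i); rewrite // addrC.
move: doubled; rewrite (expr2n_pred i); lra.
Qed.

Lemma Econs_coord i (G : option bool -> R) :
  Econs (fun _ x => G (x i)) = (2 * G None + G (Some false) + G (Some true)) / 4.
Proof.
rewrite /Econs; under eq_bigr do rewrite sum_consistent_coord mulrDl.
rewrite big_split /= sumr_const card_inB -big_distrl /= (sum_coord i (fun c => G (Some c))).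
rewrite -[_ *+ 2 ^ n]mulr_natr natrX expr4n (expr2n_pred i).
set p := 2 ^+ n.-1; have p_neq0 : p != 0 by rewrite expf_neq0 // pnatr_eq0.
by field; rewrite p_neq0.
Qed.

Definition star_weight (o : option bool) : R := if o is Some _ then 2^-1 else 1.

Lemma D_overwriteE (i : 'I_n) (b : inB n) (x : inA n) : D_overwrite R i b x
  = (n%:R * 4 ^+ n)^-1 * star_weight (x i) * \prod_(j | j != i) (compat (x j) (b j))%:R.
Proof.
have factor j : match x j with None => 1/2 | Some c => if c == b j then 1/2 else 0 end
    = 2^-1 * (compat (x j) (b j))%:R :> R.
  by case: (x j) => [c|] /=; [case: (c == b j)|]; rewrite /= ?mulr1 ?mulr0 ?div1r.
rewrite /D_overwrite (eq_bigr _ (fun j _ => factor j)) big_split /=.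
have -> : \prod_(j | j != i) (2^-1 : R) = 2^-1 ^+ n.-1.
  by have := prodr_const (predC1 i) (2^-1 : R); rewrite cardC1 card_ord.
rewrite natrX expr4n (expr2n_pred i) exprVn.
set p := 2 ^+ n.-1; have p_neq0 : p != 0 by rewrite expf_neq0 // pnatr_eq0.
have n_neq0 : n%:R != 0 :> R by rewrite pnatr_eq0 -lt0n (leq_ltn_trans _ (ltn_ord i)).
by case: (x i) => [c|] /=; field; rewrite p_neq0 n_neq0.
Qed.

Lemma D_overwrite_flip i b x : D_overwrite R i (flip i b) x = D_overwrite R i b x.
Proof.
by rewrite !D_overwriteE; congr (_ * _); apply: eq_bigr => j j_neq_i; rewrite upd_ne.
Qed.

Lemma sum_compat_flip i o (G : inB n -> R) : (forall b, G (flip i b) = G b) ->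
  \sum_(b : inB n) (compat o (b i))%:R * G b = star_weight o * \sum_(b : inB n) G b.
Proof.
move=> G_flip.
have flipped : \sum_(b : inB n) (compat o (b i))%:R * G b
    = \sum_(b : inB n) (compat o (~~ b i))%:R * G b.
  by rewrite -(sum_flip i); apply: eq_bigr => b _; rewrite G_flip upd_eq.
have doubled : \sum_(b : inB n) (compat o (b i))%:R * G b
    + \sum_(b : inB n) (compat o (b i))%:R * G b = 2 * (star_weight o * \sum_(b : inB n) G b).
  rewrite {2}flipped -big_split mulrA mulr_sumr; apply: eq_bigr => b _.
  by case: (o) => [[]|] /=; case: (b i) => /=; lra.
lra.
Qed.

Lemma sum_D_overwrite i (H : inB n -> inA n -> R) :
  (forall b x, H (flip i b) x = H b x) ->
  \sum_(b : inB n) \sum_(x : inA n) D_overwrite R i b x * H b x = n%:R^-1 * Econs H.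
Proof.
move=> H_flip; rewrite /Econs mulrA -invfM.
rewrite exchange_big [X in _ * X]exchange_big mulr_sumr.
apply: eq_bigr => x _ /=.
under eq_bigr do rewrite D_overwriteE -!mulrA.
rewrite -mulr_sumr -mulr_sumr; congr (_ * _).
rewrite [RHS](eq_bigr (fun b : inB n => (compat (x i) (b i))%:R
    * (\prod_(j | j != i) (compat (x j) (b j))%:R * H b x))); last first.
  by move=> b _; rewrite /consistentR (bigD1 i) //= mulrA.
rewrite sum_compat_flip // => b; rewrite H_flip; congr (_ * _).
by apply: eq_bigr => j j_neq_i; rewrite upd_ne.
Qed.

Lemma consistentR_flip i (x : inA n) (b : inB n) :
  x i = None -> consistentR x (flip i b) = consistentR x b.
Proof.
move=> x_i; apply: eq_bigr => j _.
by have [->|j_neq_i] := eqVneq j i; rewrite ?x_i // upd_ne.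
Qed.

Lemma Econs_flip_star i (F G : inB n -> inA n -> R) :
  Econs (fun b x => if x i is None then F b x else G b x)
  = Econs (fun b x => if x i is None then F (flip i b) x else G b x).
Proof.
congr (_ * _); rewrite exchange_big [RHS]exchange_big; apply: eq_bigr => x _ /=.
case x_i: (x i) => [c|] //.
rewrite -[RHS](sum_flip i); apply: eq_bigr => b _.
by rewrite flipK consistentR_flip.
Qed.

(** * Deterministic protocols *)

Section Protocol.
Variables (a : inA n -> seq bool) (B : seq bool -> inB n -> 'I_n -> bool).

Definition det_cost : R :=
  \sum_(i : 'I_n) \sum_(b : inB n) \sum_(x : inA n) D_overwrite R i b x * (size (a x))%:R.

Definition det_error : R :=
  \sum_(i : 'I_n) \sum_(b : inB n) \sum_(x : inA n)
     D_overwrite R i b x * (if ow_correct i x (B (a x) b i) then 0 else 1).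

Definition guess_ok (b : inB n) (x : inA n) (i : 'I_n) : bool := B (a x) b i == b i.

Definition coord_weight (revealed ok : bool) : R :=
  if revealed then (if ok then 2^-1 else 4^-1) else (if ok then 2^-1 else 3/4).

Definition code_len (revealed ok : bool) : R := - ln (coord_weight revealed ok).

Definition msg_weight (m : seq bool) (b : inB n) (x : inA n) : R :=
  \prod_i coord_weight (x i != None) (B m b i == b i).

(* For fixed b, a sub-probability on the x consistent with b ([sum_code_weight]):
   the message, then for each i whether x_i is a star, with odds set by Bob's guess. *)
Definition code_weight (b : inB n) (x : inA n) : R :=
  2^-1 * 4^-1 ^+ size (a x) * msg_weight (a x) b x.

Lemma coord_weight_gt0 revealed ok : 0 < coord_weight revealed ok.
Proof. by case: revealed; case: ok; rewrite /coord_weight; lra. Qed.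

Lemma msg_weight_gt0 m b x : 0 < msg_weight m b x.
Proof. by apply: prodr_gt0 => i _; apply: coord_weight_gt0. Qed.

Lemma code_weight_gt0 b x : 0 < code_weight b x.
Proof. by rewrite !mulr_gt0 ?exprn_gt0 ?invr_gt0 ?ltr0n ?msg_weight_gt0. Qed.

Lemma sum_msg_weight m b : \sum_(x : inA n) consistentR x b * msg_weight m b x = 1.
Proof.
rewrite (sum_consistent_prod (fun j o => coord_weight (o != None) (B m b j == b j))).
by rewrite big1 // => j _ /=; case: (_ == _); rewrite /coord_weight; lra.
Qed.

Lemma sum_code_weight b : \sum_(x : inA n) consistentR x b * code_weight b x <= 1.
Proof.
rewrite (sum_partition_undup a).
have fiber m :
    \sum_(x | a x == m) consistentR x b * code_weight b x <= 2^-1 * 4^-1 ^+ size m.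
  rewrite (eq_bigr (fun x => 2^-1 * 4^-1 ^+ size m * (consistentR x b * msg_weight m b x))).
    rewrite -mulr_sumr ler_piMr ?mulr_ge0 ?exprn_ge0 //; try lra.
    rewrite -(sum_msg_weight m b) [leRHS](bigID (fun x => a x == m)) /= lerDl.
    by apply: sumr_ge0 => x _; rewrite mulr_ge0 ?consistentR_ge0 ?ltW ?msg_weight_gt0.
  by move=> x /eqP a_x; rewrite /code_weight a_x mulrCA.
apply: le_trans (ler_sum _ (fun m _ => fiber m)) _.
rewrite -mulr_sumr; have := @sum_exp4V_size R _ (undup_uniq [seq a x | x <- enum (inA n)]).
lra.
Qed.

Lemma Econs_neg_ln_code_weight :
  n%:R * ln 2 <= Econs (fun b x => - ln (code_weight b x)).
Proof.
have entropy b :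
    2 ^+ n * (n%:R * ln 2) <= \sum_(x : inA n) consistentR x b * - ln (code_weight b x).
  rewrite [n%:R * _]mulr_natl -lnXn //; apply: gibbs_inequality.
  - by move=> x; apply: consistentR_ge0.
  - by move=> x; apply: code_weight_gt0.
  - exact: sum_consistent.
  - by rewrite exprn_gt0.
  - exact: sum_code_weight.
have : \sum_(b : inB n) 2 ^+ n * (n%:R * ln 2)
    <= \sum_(b : inB n) \sum_(x : inA n) consistentR x b * - ln (code_weight b x).
  by apply: ler_sum => b _; exact: entropy.
rewrite sumr_const card_inB -[_ *+ _]mulr_natl natrX mulrA -expr4n => total.
by rewrite /Econs ler_pdivlMl // exprn_gt0.
Qed.

Lemma neg_ln_code_weight b x : - ln (code_weight b x)
  = ln 2 + 2 * ln 2 * (size (a x))%:R + \sum_i code_len (x i != None) (guess_ok b x i).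
Proof.
rewrite /code_weight !lnM ?posrE ?mulr_gt0 ?exprn_gt0 ?invr_gt0 ?ltr0n ?msg_weight_gt0 //.
rewrite lnXn ?invr_gt0 // !lnV ?posrE // ln4 /msg_weight ln_prod => [|i _]; last first.
  exact: coord_weight_gt0.
by rewrite /code_len sumrN -mulr_natl; ring.
Qed.

Lemma det_costE : (0 < n)%N -> det_cost = Econs (fun _ x => (size (a x))%:R).
Proof.
move=> n_gt0; set E := Econs _.
rewrite /det_cost (eq_bigr (fun i => n%:R^-1 * E)) => [|i _]; last exact: sum_D_overwrite.
rewrite -mulr_sumr sumr_const card_ord -[E *+ n]mulr_natl mulrA mulVf ?mul1r //.
by rewrite pnatr_eq0 -lt0n.
Qed.

Lemma code_len_revealed ok : code_len true ok = ln 2 + ln 2 * (~~ ok)%:R.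
Proof.
by rewrite /code_len /coord_weight; case: ok; rewrite /= lnV ?posrE // ?ln4; ring.
Qed.

Lemma code_len_star : code_len false true + code_len false false = ln 2 + ln (4/3).
Proof.
rewrite /code_len /coord_weight /= lnV ?posrE // -(invf_div 4 3) lnV ?opprK //.
by rewrite posrE; lra.
Qed.

Definition miss (i : 'I_n) (b : inB n) (x : inA n) : R :=
  ((x i != None) && ~~ guess_ok b x i)%:R.

Section FlipInvariantBob.
Hypothesis B_flip : forall m b i, B m (flip i b) i = B m b i.

Lemma guess_ok_flip b x i : guess_ok (flip i b) x i = ~~ guess_ok b x i.
Proof. by rewrite /guess_ok B_flip upd_eq; case: (B _ _ _); case: (b i). Qed.

Lemma det_errorE : det_error = n%:R^-1 * \sum_i Econs (miss i).
Proof.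
rewrite /det_error mulr_sumr; apply: eq_bigr => i _.
rewrite (@sum_D_overwrite i (fun b x => if ow_correct i x (B (a x) b i) then 0 else 1));
  last by move=> b x; rewrite B_flip.
apply: congr1; apply: eq_Econs => b x /(_ i).
rewrite /miss /guess_ok /ow_correct; case: (x i) => [c /eqP ->|] //=.
by case: (_ == _).
Qed.

Lemma Econs_code_len i :
  Econs (fun b x => code_len (x i != None) (guess_ok b x i))
  = (3 * ln 2 + ln (4/3)) / 4 + ln 2 * Econs (miss i).
Proof.
set E := Econs (fun b x => if x i is None then code_len false (guess_ok b x i) else ln 2).
have split :
    Econs (fun b x => code_len (x i != None) (guess_ok b x i)) = E + ln 2 * Econs (miss i).
  rewrite -EconsZ -EconsD; apply: eq_Econs => b x _.
  by rewrite /miss; case: (x i) => [c|] /=; rewrite ?code_len_revealed ?mulr0 ?addr0.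
have flipped :
    E = Econs (fun b x => if x i is None then code_len false (~~ guess_ok b x i) else ln 2).
  by rewrite /E Econs_flip_star; apply: eq_Econs => b x _; rewrite guess_ok_flip.
have doubled :
    E + E = 2 * Econs (fun _ x => if x i is None then (ln 2 + ln (4/3)) / 2 else ln 2).
  rewrite {2}flipped -EconsD -EconsZ; apply: eq_Econs => b x _.
  case: (x i) => [c|] /=; first lra.
  by case: (guess_ok b x i); rewrite /= ?[code_len false false + _]addrC code_len_star; lra.
have := Econs_coord i (fun o => if o is None then (ln 2 + ln (4/3)) / 2 else ln 2).
rewrite split /= => coord; move: doubled; rewrite coord; lra.
Qed.

Lemma det_lower_bound : (0 < n)%N ->
  n%:R * ln (3/2) <= 4 * ln 2 * (2 * det_cost + 1 + n%:R * det_error).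
Proof.
move=> n_gt0; have := Econs_neg_ln_code_weight.
rewrite (eq_Econs (fun b x _ => neg_ln_code_weight b x)) !EconsD Econs_cst EconsZ -det_costE //.
rewrite Econs_sum (eq_bigr _ (fun i _ => Econs_code_len i)) big_split /= sumr_const card_ord.
rewrite -mulr_sumr (_ : \sum_i Econs (miss i) = n%:R * det_error); last first.
  by rewrite det_errorE mulrA mulfV ?mul1r // pnatr_eq0 -lt0n.
rewrite ln3half -mulr_natl.
lra.
Qed.

End FlipInvariantBob.

End Protocol.

(** * Making Bob oblivious to b_i at coordinate i *)

Section Reduction.
Variables (a : inA n -> seq bool) (B : seq bool -> inB n -> 'I_n -> bool).

Definition fixed_error (i : 'I_n) (c : bool) : R :=
  \sum_(b : inB n) \sum_(x : inA n) D_overwrite R i b x *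
     (if ow_correct i x (B (a x) (upd b i c) i) then 0 else 1).

Lemma fixed_error_sum i : fixed_error i false + fixed_error i true
  = 2 * \sum_(b : inB n) \sum_(x : inA n) D_overwrite R i b x *
     (if ow_correct i x (B (a x) b i) then 0 else 1).
Proof.
pose err (b : inB n) x : R := if ow_correct i x (B (a x) b i) then 0 else 1.
have flipped : \sum_(b : inB n) \sum_(x : inA n) D_overwrite R i b x * err b x
    = \sum_(b : inB n) \sum_(x : inA n) D_overwrite R i b x * err (flip i b) x.
  rewrite -[RHS](sum_flip i); apply: eq_bigr => b _.
  by apply: eq_bigr => x _; rewrite flipK D_overwrite_flip.
rewrite mulr_natl mulr2n {2}flipped -!big_split /=; apply: eq_bigr => b _.
have upd_same : upd b i (b i) = b by exact: upd_id.
have upd_other : upd b i (~~ b i) = flip i b by [].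
by case: (b i) upd_same upd_other => /= -> ->; rewrite // addrC.
Qed.

Definition best_bit (i : 'I_n) : bool := fixed_error i true <= fixed_error i false.

Definition oblivious_bob (m : seq bool) (b : inB n) (i : 'I_n) : bool :=
  B m (upd b i (best_bit i)) i.

Lemma oblivious_bob_flip m b i : oblivious_bob m (flip i b) i = oblivious_bob m b i.
Proof. by rewrite /oblivious_bob upd_upd. Qed.

Lemma det_error_oblivious_bob : det_error a oblivious_bob <= det_error a B.
Proof.
apply: ler_sum => i _; have := fixed_error_sum i.
rewrite /oblivious_bob -/(fixed_error i (best_bit i)) /best_bit.
by have [] := leP (fixed_error i true) (fixed_error i false); lra.
Qed.

End Reduction.

End Overwrite.

(** * Randomized protocols *)

Section Randomized.
Variables (R : realType) (n : nat) (Rnd : finType) (rho : Rnd -> R).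
Variables (alice : Rnd -> inA n -> seq bool) (bob : Rnd -> seq bool -> inB n -> 'I_n -> bool).

Lemma ow_costE : ow_cost rho alice = \sum_r rho r * det_cost R (alice r).
Proof.
apply: eq_bigr => r _; rewrite /det_cost !mulr_sumr; apply: eq_bigr => i _.
rewrite mulr_sumr; apply: eq_bigr => b _; rewrite mulr_sumr; apply: eq_bigr => x _.
by rewrite mulrA.
Qed.

Lemma ow_errorE : ow_error rho alice bob = \sum_r rho r * det_error R (alice r) (bob r).
Proof.
apply: eq_bigr => r _; rewrite /det_error !mulr_sumr; apply: eq_bigr => i _.
rewrite mulr_sumr; apply: eq_bigr => b _; rewrite mulr_sumr; apply: eq_bigr => x _.
by rewrite mulrA.
Qed.

Lemma ow_lower_bound : (0 < n)%N -> (forall r, 0 <= rho r) -> \sum_r rho r = 1 ->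
  n%:R * ln (3/2) <= 4 * ln 2 * (2 * ow_cost rho alice + 1 + n%:R * ow_error rho alice bob).
Proof.
move=> n_gt0 rho_ge0 rho_sum.
have each r : n%:R * ln (3/2)
    <= 4 * ln 2 * (2 * det_cost R (alice r) + 1 + n%:R * det_error R (alice r) (bob r)).
  apply: le_trans (det_lower_bound R (alice r) (oblivious_bob_flip R (alice r) (bob r)) n_gt0) _.
  have ln2_ge0 := ltW (ln2_gt0 R).
  by rewrite ler_wpM2l ?mulr_ge0 // lerD2l ler_wpM2l ?ler0n ?det_error_oblivious_bob.
have linear : \sum_r rho r * (4 * ln 2
      * (2 * det_cost R (alice r) + 1 + n%:R * det_error R (alice r) (bob r)))
    = 4 * ln 2 * (2 * ow_cost rho alice + 1 + n%:R * ow_error rho alice bob).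
  rewrite ow_costE ow_errorE (eq_bigr (fun r => 4 * ln 2 * 2 * (rho r * det_cost R (alice r))
      + 4 * ln 2 * rho r + 4 * ln 2 * n%:R * (rho r * det_error R (alice r) (bob r)))).
    by rewrite !big_split /= -!mulr_sumr rho_sum; ring.
  by move=> r _; ring.
have : \sum_r rho r * (n%:R * ln (3/2)) <= \sum_r rho r * (4 * ln 2
    * (2 * det_cost R (alice r) + 1 + n%:R * det_error R (alice r) (bob r))).
  by apply: ler_sum => r _; rewrite ler_wpM2l.
by rewrite -mulr_suml rho_sum mul1r linear.
Qed.

End Randomized.

Theorem mainTheorem17 (R : realType) (delta : R) :
  0 < delta -> delta < 1 / 10 ->
  exists c : R, 0 < c /\
  exists N : nat, forall n : nat, (N <= n)%N ->
  forall (Rnd : finType) (rho : Rnd -> R),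
    (forall r, 0 <= rho r) -> \sum_(r : Rnd) rho r = 1 ->
  forall (alice : Rnd -> inA n -> seq bool)
         (bob : Rnd -> seq bool -> inB n -> 'I_n -> bool),
    ow_error rho alice bob <= delta ->
    c * n%:R <= ow_cost rho alice.
Proof.
move=> delta_gt0 delta_small; have ln2_pos := ln2_gt0 R.
set g := ln (3/2) - 4 * ln 2 * delta.
have g_gt0 : 0 < g.
  have : 4 * ln 2 * delta < 4 * ln 2 * (1 / 10) by rewrite ltr_pM2l ?mulr_gt0.
  have := ln2_lt_ln3half R; rewrite /g; lra.
exists (g / (16 * ln 2)); split; first by rewrite divr_gt0 ?mulr_gt0.
exists (Num.Def.trunc (8 * ln 2 / g)).+1.
move=> n n_large Rnd rho rho_ge0 rho_sum alice bob error_small.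
have n_gt0 : (0 < n)%N := leq_trans (ltn0Sn _) n_large.
have n_g_large : 8 * ln 2 <= n%:R * g.
  have : 8 * ln 2 / g < n%:R by apply: lt_le_trans (truncnS_gt _) _; rewrite ler_nat.
  by rewrite ltr_pdivrMr // mulrC => /ltW.
rewrite mulrAC ler_pdivrMr ?mulr_gt0 //.
have := ow_lower_bound alice bob n_gt0 rho_ge0 rho_sum.
have : 4 * ln 2 * (n%:R * ow_error rho alice bob) <= 4 * ln 2 * (n%:R * delta).
  by rewrite ler_pM2l ?mulr_gt0 //; apply: ler_wpM2l; rewrite ?ler0n.
move: n_g_large; rewrite /g; lra.
Qed.
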